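(* Let $X\subset \mathbb{R}^m$ be a real nonsingular irreducible algebraic space of dimension $n$, let $F : X\to \mathbb{R}^{n-1}$ be an algebraic map, and let $a$ be an interior point of $\mathrm{Im}\, F \setminus \overline{F(\mathrm{Sing}\, F)}$. If $NV(a)$ holds, then there is a neighbourhood $D\subset\mathbb{R}^{n-1}$ of $a$ such that $NV(b)$ holds for all $b\in D$.
   Context: $X_b:=F^{-1}(b)$, with decomposition $X_b=\bigsqcup_j X_b^j$ into connected components; $\mu(b):=\max_j \inf_{x\in X_b^j}\|x\|$. There is vanishing at infinity at a point $c\in\mathbb{R}^{n-1}$ if there exists a sequence $c_k\to c$ with $\lim_{k\to\infty}\mu(c_k)=\infty$; if there is no such sequence one writes $NV(c)$ (no vanishing at $c$). *)

From HB Require Import structures.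
From mathcomp Require Import all_boot all_order all_algebra.
From mathcomp Require Import all_classical all_reals all_analysis.
From mathcomp Require mpoly.
Set Implicit Arguments. Unset Strict Implicit. Unset Printing Implicit Defensive.
Import Order.TTheory GRing.Theory Num.Theory.
Import numFieldNormedType.Exports.
Local Open Scope classical_set_scope.
Local Open Scope ring_scope.

Section RealAlg.
Variable R : realType.

Definition poly_m (m : nat) := mpoly.mpoly m R.

Definition peval {m : nat} (p : poly_m m) (x : 'rV[R]_m) : R :=
  mpoly.meval (fun j => x ord0 j) p.

Definition zero_set {m : nat} (S : set (poly_m m)) : set 'rV[R]_m :=
  [set x | forall p, S p -> peval p x = 0].

Definition algebraic_set {m : nat} (X : set 'rV[R]_m) : Prop :=
  exists S : set (poly_m m), X = zero_set S.

Definition vanishing_ideal {m : nat} (X : set 'rV[R]_m) : set (poly_m m) :=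
  [set p | forall x, X x -> peval p x = 0].

Definition irreducible_alg {m : nat} (X : set 'rV[R]_m) : Prop :=
  [/\ algebraic_set X, X !=set0 &
      forall Y Z : set 'rV[R]_m, algebraic_set Y -> algebraic_set Z ->
        X = Y `|` Z -> X = Y \/ X = Z].

Definition irr_chain {m : nat} (X : set 'rV[R]_m) (d : nat)
    (C : nat -> set 'rV[R]_m) : Prop :=
  (forall i, (i <= d)%N -> irreducible_alg (C i) /\ C i `<=` X) /\
  (forall i, (i < d)%N -> C i `<` C i.+1).

Definition alg_dim {m : nat} (X : set 'rV[R]_m) (n : nat) : Prop :=
  (exists C, irr_chain X n C) /\ (forall d C, irr_chain X d C -> (d <= n)%N).

Definition jacobian {m k : nat} (ps : 'I_k -> poly_m m) (x : 'rV[R]_m)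
  : 'M[R]_(k, m) :=
  \matrix_(i < k, j < m) peval (mpoly.mderiv j (ps i)) x.

Definition ideal_jac_rank {m : nat} (X : set 'rV[R]_m) (x : 'rV[R]_m)
    (r : nat) : Prop :=
  (exists k (ps : 'I_k -> poly_m m),
      (forall i, vanishing_ideal X (ps i)) /\ \rank (jacobian ps x) = r) /\
  (forall k (ps : 'I_k -> poly_m m),
      (forall i, vanishing_ideal X (ps i)) -> (\rank (jacobian ps x) <= r)%N).

Definition nonsingular_alg {m : nat} (X : set 'rV[R]_m) (n : nat) : Prop :=
  forall x, X x -> ideal_jac_rank X x (m - n).

Definition tangent_space {m : nat} (X : set 'rV[R]_m) (x : 'rV[R]_m)
  : set 'rV[R]_m :=
  [set v | forall p, vanishing_ideal X p ->
     \sum_(j < m) peval (mpoly.mderiv j p) x * v ord0 j = 0].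

Definition polymap {m k : nat} (f : 'I_k -> poly_m m) (x : 'rV[R]_m)
  : 'rV[R]_k := \row_(i < k) peval (f i) x.

Definition dpolymap {m k : nat} (f : 'I_k -> poly_m m) (x v : 'rV[R]_m)
  : 'rV[R]_k := \row_(i < k) \sum_(j < m) peval (mpoly.mderiv j (f i)) x * v ord0 j.

Definition sing_set {m k : nat} (X : set 'rV[R]_m) (f : 'I_k -> poly_m m)
  : set 'rV[R]_m :=
  [set x | X x /\ ~ (forall w : 'rV[R]_k,
       exists2 v, tangent_space X x v & dpolymap f x v = w)].

Definition enorm {m : nat} (x : 'rV[R]_m) : R :=
  Num.sqrt (\sum_(j < m) x ord0 j ^+ 2).

Definition fibre {m k : nat} (X : set 'rV[R]_m) (f : 'I_k -> poly_m m)
    (b : 'rV[R]_k) : set 'rV[R]_m :=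
  X `&` [set x | polymap f x = b].

Definition components {m : nat} (A : set 'rV[R]_m) : set (set 'rV[R]_m) :=
  [set C | exists2 x, A x & C = connected_component A x].

(* mu(b) = max_j inf_{x in X_b^j} ||x||  (as a sup in the extended reals;
   it is a max since X_b has finitely many components; -oo if X_b is empty) *)
Definition mu {m k : nat} (X : set 'rV[R]_m) (f : 'I_k -> poly_m m)
    (b : 'rV[R]_k) : \bar R :=
  ereal_sup [set ereal_inf [set (enorm y)%:E | y in C] | C in components (fibre X f b)].

Definition vanishing_at {m k : nat} (X : set 'rV[R]_m) (f : 'I_k -> poly_m m)
    (c : 'rV[R]_k) : Prop :=
  exists c_ : nat -> 'rV[R]_k,
    c_ @ \oo --> c /\ (fun j => mu X f (c_ j)) @ \oo --> +oo%E.

Definition NV {m k : nat} (X : set 'rV[R]_m) (f : 'I_k -> poly_m m)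
    (c : 'rV[R]_k) : Prop := ~ vanishing_at X f c.

End RealAlg.

(** Only the shape of [NV] matters: [vanishing_at X f c] says that [mu X f]
    tends to [+oo] along some sequence converging to [c].  In a metric space
    such a sequence exists iff every neighbourhood of [c] contains points where
    [mu] exceeds any given bound (a diagonal argument along the balls of radius
    [1/(j+1)]).  That second condition is visibly closed, so [NV] is open. *)

From HB Require Import structures.
From mathcomp Require Import all_boot all_order all_algebra.
From mathcomp Require Import all_classical all_reals all_analysis.
Import Order.TTheory GRing.Theory Num.Theory.
Import numFieldNormedType.Exports.
Local Open Scope classical_set_scope.
Local Open Scope ring_scope.

Section BlowUp.
Variables (R : realType) (T : pseudoMetricType R) (g : T -> \bar R).

Definition blows_up_at (c : T) : Prop :=
  exists u : nat -> T, u @ \oo --> c /\ (fun j => g (u j)) @ \oo --> +oo%E.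

Lemma blows_up_atP (c : T) :
  blows_up_at c <->
  forall (A : R) (U : set T), nbhs c U -> exists2 x, U x & (A%:E < g x)%E.
Proof.
split.
  move=> [u [uc /cvgeyPgt gu]] A U cU.
  have uU : \forall j \near \oo, U (u j) := uc U cU.
  have [j [Uuj Agj]] := filter_ex (filterI uU (gu A)).
  by exists (u j).
move=> large.
have /choice[u uP] : forall j : nat,
    exists x, ball c (harmonic j) x /\ (j%:R%:E < g x)%E.
  move=> j; have [x cx gx] := large j%:R _ (nbhsx_ballx c _ (harmonic_gt0 j)).
  by exists x.
exists u; split.
  apply/cvg_ballP => e e0; near=> j.
  apply: (le_ball (ltW _) (proj1 (uP j))).
  by near: j; apply: cvgr_lt e0; exact: cvg_harmonic.
apply/cvgeyPgt => A; near=> j.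
apply: lt_trans (proj2 (uP j)); rewrite lte_fin.
by near: j; exact: nbhs_infty_gtr.
Unshelve. all: by end_near. Qed.

Lemma near_not_blows_up (a : T) :
  ~ blows_up_at a -> \forall b \near a, ~ blows_up_at b.
Proof.
move=> nba; apply: contrapT => not_near; apply: nba.
apply/blows_up_atP => A U /nbhs_interior aU.
have [b [bU bb]] : exists b, U° b /\ blows_up_at b.
  apply: contrapT => none; apply: not_near; apply: filterS aU => b bU bb.
  by apply: none; exists b.
exact: (proj1 (blows_up_atP b) bb A U bU).
Qed.

End BlowUp.

Arguments blows_up_at {R T}.

Theorem lemma3p2 (R : realType) (m n : nat) (hn : (0 < n)%N)
  (X : set 'rV[R]_m)
  (hX : irreducible_alg X) (hdim : alg_dim X n) (hns : nonsingular_alg X n)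
  (f : 'I_(n.-1) -> poly_m R m) (a : 'rV[R]_(n.-1))
  (ha : interior (polymap f @` X `\` closure (polymap f @` sing_set X f)) a) :
  NV X f a ->
  exists2 D : set 'rV[R]_(n.-1), nbhs a D & forall b, D b -> NV X f b.
Proof.
move=> NVa; exists [set b | ~ blows_up_at (mu X f) b]; last by [].
by apply: (@near_not_blows_up R 'rV[R]_(n.-1)); exact: NVa.
Qed.
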